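(* For every $n\equiv 3 \pmod{16}$ with $n\geq 19$, there exists an almost 2-perfect maximum 8-cycle packing of $K_n$.
   Context: An 8-cycle packing of $K_n$ on vertex set $\mathcal{X}$ is a triple $(\mathcal{X},\mathcal{C},\mathcal{L})$ with $\mathcal{C}$ a collection of pairwise edge-disjoint 8-cycles of $K_n$ and leave $\mathcal{L}$ the set of edges in no cycle of $\mathcal{C}$; it is maximum if $|\mathcal{L}|$ is minimum among all 8-cycle packings of $K_n$. For an 8-cycle $C$, an inside 8-cycle of $C$ is an 8-cycle on the same vertex set sharing no edge with $C$. The packing is almost 2-perfect if one can choose for each $C\in\mathcal{C}$ an inside 8-cycle $C'$ such that $(\mathcal{X},\{C'\},\mathcal{L})$ is again an 8-cycle packing with the same leave. *)

From HB Require Import structures.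
From mathcomp Require Import all_boot.
Set Implicit Arguments. Unset Strict Implicit. Unset Printing Implicit Defensive.

Definition Kn_edges (n : nat) : {set {set 'I_n}} := [set e : {set 'I_n} | #|e| == 2].

Definition is_8cycle (n : nat) (c : 8.-tuple 'I_n) : bool := uniq c.

Definition cyc_edges (n : nat) (c : 8.-tuple 'I_n) : {set {set 'I_n}} :=
  [set [set tnth c i; tnth c (inord ((i.+1) %% 8) : 'I_8)] | i : 'I_8].

Definition cyc_verts (n : nat) (c : 8.-tuple 'I_n) : {set 'I_n} := [set x in c].

Definition is_packing (n : nat) (P : seq (8.-tuple 'I_n)) : bool :=
  all (@is_8cycle n) P &&
  pairwise (fun c d => [disjoint cyc_edges c & cyc_edges d]) P.

Definition leave (n : nat) (P : seq (8.-tuple 'I_n)) : {set {set 'I_n}} :=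
  Kn_edges n :\: \bigcup_(c <- P) cyc_edges c.

Definition is_maximum_packing (n : nat) (P : seq (8.-tuple 'I_n)) : Prop :=
  is_packing P /\
  forall Q : seq (8.-tuple 'I_n), is_packing Q -> #|leave P| <= #|leave Q|.

Definition inside_8cycle (n : nat) (c c' : 8.-tuple 'I_n) : bool :=
  [&& is_8cycle c', cyc_verts c' == cyc_verts c &
      [disjoint cyc_edges c' & cyc_edges c]].

Definition almost_2perfect (n : nat) (P : seq (8.-tuple 'I_n)) : Prop :=
  exists P' : seq (8.-tuple 'I_n),
    [/\ size P' = size P, all2 (@inside_8cycle n) P P',
        is_packing P' & leave P' = leave P].

From mathcomp Require Import all_boot zify.
Set Implicit Arguments. Unset Strict Implicit. Unset Printing Implicit Defensive.

(* Write n = 3 + 16 k and split the vertices into the three points 0, 1, 2 and k blocks of 16.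
   Each block together with {0, 1, 2} spans a K_19, and a fixed decomposition of K_19 minus
   the triangle {0, 1, 2} into 21 8-cycles is copied onto it; each pair of blocks spans a
   K_16,16, onto which a fixed decomposition into 32 8-cycles is copied.  The leave is the
   triangle.  Every packing of K_n leaves C(n, 2) - 8 |C| edges, a number congruent to 3
   modulo 8, so a leave of size 3 is minimum.  Both base decompositions come with a partner
   decomposition made of inside 8-cycles of their cycles; copying the partners in the same
   way gives the required inside cycles, with the same leave.
   Disjointness of the copied cycles is never checked directly: cycles covering all edges
   but the triangle with total length C(n, 2) - 3 must be edge-disjoint by counting. *)

Lemma leq_card_bigcup_seq (T I : finType) (s : seq I) (F : I -> {set T}) :
  #|\bigcup_(i <- s) F i| <= \sum_(i <- s) #|F i|
    ?= iff pairwise (fun i j => [disjoint F i & F j]) s.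
Proof.
elim: s => [|a s IH]; first by rewrite !big_nil cards0; apply/leqif_refl.
have disjU : [disjoint F a & \bigcup_(i <- s) F i] = all (fun j => [disjoint F a & F j]) s.
  by rewrite bigcup_seq; apply/bigcup_disjointP/allP => H j /H.
rewrite -(mono_leqif (leq_add2l #|F a|)) in IH.
by rewrite !big_cons pairwise_cons -disjU; apply: leqif_trans (leq_card_setU _ _) IH.
Qed.

Lemma eq_set2 (T : finType) (a b c d : T) :
  [set a; b] = [set c; d] -> (a = c /\ b = d) \/ (a = d /\ b = c).
Proof.
move=> E.
have : a \in [set c; d] by rewrite -E set21.
have : b \in [set c; d] by rewrite -E set22.
have : c \in [set a; b] by rewrite E set21.
have : d \in [set a; b] by rewrite E set22.
by do 4!case/set2P=> ?; subst; first [by left | by right].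
Qed.

Lemma all2_cat (S T : Type) (r : S -> T -> bool) s1 s2 t1 t2 :
  all2 r s1 t1 -> all2 r s2 t2 -> all2 r (s1 ++ s2) (t1 ++ t2).
Proof. by elim: s1 t1 => [|x s1 IH] [|y t1] //= /andP[-> /IH]. Qed.

Lemma all2_flatten (S T : Type) (r : S -> T -> bool) ss tt :
  all2 (all2 r) ss tt -> all2 r (flatten ss) (flatten tt).
Proof. by elim: ss tt => [|s ss IH] [|t tt] //= /andP[/all2_cat + /IH]; apply. Qed.

Lemma all2_map_same (I S T : Type) (r : S -> T -> bool) (f : I -> S) (g : I -> T) s :
  all2 r (map f s) (map g s) = all (fun i => r (f i) (g i)) s.
Proof. by elim: s => //= i s ->. Qed.

Section Packings.
Variable n : nat.
Implicit Types (c : 8.-tuple 'I_n) (P : seq (8.-tuple 'I_n)).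

Lemma val_inord_succ (i : 'I_8) : (inord (i.+1 %% 8) : 'I_8) = i.+1 %% 8 :> nat.
Proof. by rewrite inordK // ltn_pmod. Qed.

Lemma cyc_edgesP c e :
  reflect (exists i : 'I_8, e = [set tnth c i; tnth c (inord (i.+1 %% 8))])
          (e \in cyc_edges c).
Proof. by apply: (iffP imsetP) => [[i _ ->]|[i ->]]; exists i. Qed.

Lemma card_cyc_edges c : is_8cycle c -> #|cyc_edges c| = 8.
Proof.
move=> /tuple_uniqP inj; rewrite card_imset ?card_ord // => i j.
case/eq_set2=> [[/inj -> //]|[/inj/(congr1 val) Eij /inj/(congr1 val) Eji]].
have := val_inord_succ i; have := val_inord_succ j; have := ltn_ord i; have := ltn_ord j.
move: Eij Eji => /= Eij Eji; lia.
Qed.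

Lemma cyc_edges_sub c : is_8cycle c -> cyc_edges c \subset Kn_edges n.
Proof.
move=> /tuple_uniqP inj; apply/subsetP => _ /cyc_edgesP [i ->].
suff /negPf ne : tnth c i != tnth c (inord (i.+1 %% 8)) by rewrite inE cards2 ne.
apply/eqP => /inj/(congr1 val) /=; have := val_inord_succ i; have := ltn_ord i; lia.
Qed.

Lemma card_Kn_edges : #|Kn_edges n| = 'C(n, 2).
Proof. by rewrite card_draws card_ord. Qed.

Lemma sum_card_cyc_edges P :
  all (@is_8cycle n) P -> \sum_(c <- P) #|cyc_edges c| = 8 * size P.
Proof.
elim: P => [|c P IH]; first by rewrite big_nil muln0.
by rewrite big_cons => /andP[/card_cyc_edges -> /IH ->]; rewrite mulnS.
Qed.

Lemma bigcup_cyc_edges_sub P :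
  all (@is_8cycle n) P -> \bigcup_(c <- P) cyc_edges c \subset Kn_edges n.
Proof.
by move=> /allP cycP; rewrite bigcup_seq; apply/bigcupsP => c /cycP/cyc_edges_sub.
Qed.

Lemma card_leave_cover P :
  all (@is_8cycle n) P ->
  #|leave P| + #|\bigcup_(c <- P) cyc_edges c| = 'C(n, 2).
Proof.
move=> cycP; rewrite -card_Kn_edges -(cardsID (\bigcup_(c <- P) cyc_edges c) (Kn_edges n)).
by rewrite (setIidPr (bigcup_cyc_edges_sub cycP)) addnC.
Qed.

Lemma card_leave P : is_packing P -> #|leave P| + 8 * size P = 'C(n, 2).
Proof.
case/andP=> cycP disjP; rewrite -sum_card_cyc_edges // -(card_leave_cover cycP).
by rewrite (eqTleqif (leq_card_bigcup_seq _ _) disjP).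
Qed.

Lemma maximum_packing_small_leave P :
  is_packing P -> #|leave P| < 8 -> is_maximum_packing P.
Proof.
move=> packP small; split=> // Q /card_leave.
have := card_leave packP; lia.
Qed.

Lemma packing_of_cover P (L : {set {set 'I_n}}) :
    all (@is_8cycle n) P -> leave P \subset L -> 8 * size P + #|L| <= 'C(n, 2) ->
  is_packing P /\ leave P = L.
Proof.
move=> cycP leaveL count.
have [leU eqU] : #|\bigcup_(c <- P) cyc_edges c| <= 8 * size P
                   ?= iff pairwise (fun c d => [disjoint cyc_edges c & cyc_edges d]) P.
  by rewrite -sum_card_cyc_edges //; apply: leq_card_bigcup_seq.
have leL := subset_leq_card leaveL; have cardP := card_leave_cover cycP.
split; first by rewrite /is_packing cycP -eqU; apply/eqP; lia.
by apply/eqP; rewrite eqEcard leaveL; lia.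
Qed.
End Packings.

(* Cycles on explicit small vertex sets are written as words [s_0; ...; s_7] of naturals, so
   that the properties of the base decompositions are decided by computation. *)
Definition succ8 (i : nat) := i.+1 %% 8.

Definition word_on (N : nat) (s : seq nat) : bool :=
  [&& size s == 8, uniq s & all (fun x => x < N) s].

Lemma sizes_of_word_on N B : all (word_on N) B -> all (fun b => size b == 8) B.
Proof. by apply: sub_all => b /and3P[]. Qed.

Definition word_adj (s : seq nat) (x y : nat) : bool :=
  has (fun i => ((nth 0 s i == x) && (nth 0 s (succ8 i) == y)) ||
                ((nth 0 s i == y) && (nth 0 s (succ8 i) == x))) (iota 0 8).

Definition word_inside (s s' : seq nat) : bool :=
  [&& all (fun x => x \in s) s', all (fun x => x \in s') s &
      ~~ has (fun i => word_adj s (nth 0 s' i) (nth 0 s' (succ8 i))) (iota 0 8)].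

Definition covers (N : nat) (W : seq (seq nat)) : bool :=
  all (fun x => all (fun y =>
    [|| x == y, (x < 3) && (y < 3) | has (fun s => word_adj s x y) W]) (iota 0 N)) (iota 0 N).

Lemma coversP N W :
  reflect (forall x y, x < N -> y < N -> x != y -> ~~ ((x < 3) && (y < 3)) ->
             has (fun s => word_adj s x y) W)
          (covers N W).
Proof.
apply: (iffP allP) => [covW x y hx hy xy xy3 | covW x].
  have := covW x; rewrite mem_iota /= hx => /(_ isT)/allP/(_ y).
  by rewrite mem_iota /= hy (negPf xy) (negPf xy3); apply.
rewrite mem_iota => /= hx; apply/allP => y; rewrite mem_iota => /= hy.
have [-> //|xy] := eqVneq x y; have [//|xy3] := boolP ((x < 3) && (y < 3)).
by rewrite covW ?orbT.
Qed.

Lemma word_adj_sym s x y : word_adj s x y = word_adj s y x.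
Proof. by apply: eq_has => i; rewrite orbC. Qed.

Section WordMap.
Variable f : nat -> nat.

Lemma nth_map_word s i : size s = 8 -> i < 8 -> nth 0 (map f s) i = f (nth 0 s i).
Proof. by move=> s8 i8; rewrite (nth_map 0) ?s8. Qed.

Lemma word_adj_map s x y : size s = 8 -> word_adj s x y -> word_adj (map f s) (f x) (f y).
Proof.
move=> s8 /hasP[i]; rewrite mem_iota /= => i8 adj; apply/hasP; exists i; rewrite ?mem_iota //.
rewrite !nth_map_word ?ltn_pmod //.
by case/orP: adj => /andP[/eqP-> /eqP->]; rewrite !eqxx ?orbT.
Qed.

Lemma has_word_adj_map B x y :
  all (fun b => size b == 8) B -> has (fun b => word_adj b x y) B ->
  has (fun b => word_adj b (f x) (f y)) [seq map f b | b <- B].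
Proof.
move=> /allP B8 /hasP[b Bb adj]; apply/hasP; exists (map f b); first exact: map_f.
by apply: word_adj_map => //; apply/eqP/B8.
Qed.

Hypothesis f_inj : injective f.

Lemma word_adj_map_inj s x y :
  size s = 8 -> word_adj (map f s) (f x) (f y) = word_adj s x y.
Proof.
move=> s8; apply: eq_in_has => i; rewrite mem_iota /= => i8.
by rewrite !nth_map_word ?ltn_pmod // !(inj_eq f_inj).
Qed.

Lemma word_inside_map s s' :
  size s = 8 -> size s' = 8 -> word_inside (map f s) (map f s') = word_inside s s'.
Proof.
move=> s8 s'8; rewrite /word_inside !all_map.
congr [&& _, _ & ~~ _].
- by apply: eq_all => x /=; rewrite mem_map.
- by apply: eq_all => x /=; rewrite mem_map.
apply: eq_in_has => i; rewrite mem_iota /= => i8.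
by rewrite !nth_map_word ?ltn_pmod // word_adj_map_inj.
Qed.

Lemma all2_word_inside_map B B' :
    all (fun b => size b == 8) B -> all (fun b => size b == 8) B' -> all2 word_inside B B' ->
  all2 word_inside [seq map f b | b <- B] [seq map f b | b <- B'].
Proof.
elim: B B' => [|b B IH] [|b' B'] //= /andP[/eqP b8 B8] /andP[/eqP b'8 B'8] /andP[bb' BB'].
by rewrite word_inside_map // bb' IH.
Qed.
End WordMap.

Section WordCycles.
Variable m : nat.

(* The default tuple and the truncation by [inord] are junk, never reached on words satisfying
   [word_on m.+1]. *)
Definition cycle_of_word (s : seq nat) : 8.-tuple 'I_m.+1 :=
  insubd (nseq_tuple 8 ord0) (map inord s).

Lemma cycle_of_word_val s : size s = 8 -> val (cycle_of_word s) = map inord s.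
Proof. by move=> s8; rewrite val_insubd size_map s8. Qed.

Lemma tnth_cycle_of_word s (i : 'I_8) :
  size s = 8 -> tnth (cycle_of_word s) i = inord (nth 0 s i).
Proof. by move=> s8; rewrite (tnth_nth ord0) cycle_of_word_val // (nth_map 0) ?s8. Qed.

Lemma inord_inj x y : x < m.+1 -> y < m.+1 -> (inord x : 'I_m.+1) = inord y -> x = y.
Proof. by move=> hx hy E; rewrite -(inordK hx) E inordK. Qed.

Lemma word_on_nth s i : word_on m.+1 s -> nth 0 s i < m.+1.
Proof.
case/and3P=> _ _ /allP sm; have [/(mem_nth 0)/sm //|le_s] := ltnP i (size s).
by rewrite nth_default.
Qed.

Lemma cycle_of_word_8cycle s : word_on m.+1 s -> is_8cycle (cycle_of_word s).
Proof.
case/and3P=> /eqP s8 us /allP sm; rewrite /is_8cycle cycle_of_word_val //.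
by rewrite map_inj_in_uniq // => x y /sm hx /sm hy; apply: inord_inj.
Qed.

Lemma cyc_edges_of_word s x y :
  word_on m.+1 s -> x < m.+1 -> y < m.+1 ->
  ([set inord x; inord y] \in cyc_edges (cycle_of_word s)) = word_adj s x y.
Proof.
move=> sm hx hy; have /and3P[/eqP s8 _ _] := sm.
have sj j : nth 0 s j < m.+1 := word_on_nth j sm.
apply/cyc_edgesP/hasP => [[i]|[i]].
  rewrite !tnth_cycle_of_word // val_inord_succ => /eq_set2 E.
  exists (val i); first by rewrite mem_iota /=.
  by case: E => -[/(inord_inj hx (sj _))-> /(inord_inj hy (sj _))->]; rewrite !eqxx ?orbT.
rewrite mem_iota /= => hi adj; exists (Ordinal hi).
rewrite !tnth_cycle_of_word // val_inord_succ /=.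
by case/orP: adj => /andP[/eqP-> /eqP->]; rewrite // setUC.
Qed.

Lemma inside_of_word s s' :
  word_on m.+1 s -> word_on m.+1 s' -> word_inside s s' ->
  inside_8cycle (cycle_of_word s) (cycle_of_word s').
Proof.
move=> sm sm' /and3P[/allP sub' /allP sub noadj].
have /and3P[/eqP s8 _ _] := sm; have /and3P[/eqP s8' _ _] := sm'.
rewrite /inside_8cycle cycle_of_word_8cycle //=; apply/andP; split.
  apply/eqP/setP => z; rewrite !inE.
  have memE t : size t = 8 -> (z \in cycle_of_word t) = (z \in map inord t).
    by move=> t8; rewrite -cycle_of_word_val.
  rewrite !memE //.
  by apply/idP/idP => /mapP[x xs ->]; apply: map_f; [apply: sub' | apply: sub].
rewrite disjoint_subset; apply/subsetP => _ /cyc_edgesP [i ->].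
rewrite inE !tnth_cycle_of_word // val_inord_succ cyc_edges_of_word ?word_on_nth //.
by apply: contra noadj => adj; apply/hasP; exists (val i); rewrite ?mem_iota /=.
Qed.

Lemma inside_of_words W W' :
    all (word_on m.+1) W -> all (word_on m.+1) W' -> all2 word_inside W W' ->
  all2 (@inside_8cycle m.+1) (map cycle_of_word W) (map cycle_of_word W').
Proof.
elim: W W' => [|s W IH] [|s' W'] //= /andP[sm Wm] /andP[sm' Wm'] /andP[ss' WW'].
by rewrite inside_of_word // IH.
Qed.

Definition triangle : {set {set 'I_m.+1}} :=
  [set [set inord 0; inord 1]; [set inord 0; inord 2]; [set inord 1; inord 2]].

Lemma card_triangle : #|triangle| <= 3.
Proof.
apply: leq_trans (leq_card_setU _ _) _.
by rewrite cardsU1 !cards1 addn1 ltnS; case: (_ \notin _).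
Qed.

Lemma mem_triangle x y :
  x < 3 -> y < 3 -> x != y -> [set inord x; inord y] \in triangle.
Proof.
rewrite /triangle !inE.
case: x => [|[|[|]]] //; case: y => [|[|[|]]] //= _ _ _; rewrite ?eqxx ?orbT //.
all: by rewrite setUC eqxx ?orbT.
Qed.

Lemma packing_of_words W :
    all (word_on m.+1) W -> covers m.+1 W -> 8 * size W + 3 <= 'C(m.+1, 2) ->
  is_packing (map cycle_of_word W) /\ leave (map cycle_of_word W) = triangle.
Proof.
move=> /allP Won /coversP covW count.
apply: packing_of_cover.
- by apply/allP => _ /mapP[s /Won sm ->]; apply: cycle_of_word_8cycle.
- apply/subsetP => e; rewrite inE => /andP[notU]; rewrite inE => /cards2P[u [v [uv Ee]]].
  rewrite {e}Ee -[u]inord_val -[v]inord_val in notU *.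
  have [/andP[u3 v3] | uv3] := boolP ((u < 3) && (v < 3)); first exact: mem_triangle.
  have /hasP[s Ws adj] := covW u v (ltn_ord u) (ltn_ord v) uv uv3.
  case/negP: notU; rewrite bigcup_seq; apply/bigcupP.
  by exists (cycle_of_word s); rewrite ?map_f ?cyc_edges_of_word ?Won.
- by rewrite size_map; apply: leq_trans count; rewrite leq_add2l card_triangle.
Qed.
End WordCycles.

Definition covers_bipartite (B : seq (seq nat)) : bool :=
  all (fun x => all (fun y => has (fun b => word_adj b x (16 + y)) B) (iota 0 16)) (iota 0 16).

Lemma covers_bipartiteP B x y :
  covers_bipartite B -> x < 16 -> y < 16 -> has (fun b => word_adj b x (16 + y)) B.
Proof.
rewrite /covers_bipartite => /allP/(_ x) + hx hy.
by rewrite mem_iota hx => /(_ isT)/allP; apply; rewrite mem_iota.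
Qed.

(* Block i is {3 + 16 i, ..., 18 + 16 i}; [lift_block i] maps {0, ..., 18} onto {0, 1, 2} and
   block i, [lift_pair i j] maps {0, ..., 15} onto block i and {16, ..., 31} onto block j. *)
Definition lift_block (i x : nat) := if x < 3 then x else x + 16 * i.

Definition lift_pair (i j x : nat) :=
  if x < 16 then 3 + 16 * i + x else 3 + 16 * j + (x - 16).

Definition ltn_pairs k := [seq (i, j) | j <- iota 0 k, i <- iota 0 j].

Definition design (B1 B2 : seq (seq nat)) k :=
  [seq map (lift_block i) b | i <- iota 0 k, b <- B1] ++
  [seq map (lift_pair p.1 p.2) b | p <- ltn_pairs k, b <- B2].

Lemma lift_block_inj i : injective (lift_block i).
Proof. by move=> x y; rewrite /lift_block; case: ifP; case: ifP; lia. Qed.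

Lemma lift_pair_inj i j : i < j -> injective (lift_pair i j).
Proof. by move=> ij x y; rewrite /lift_pair; case: ifP; case: ifP; lia. Qed.

Lemma mem_ltn_pairs k i j : ((i, j) \in ltn_pairs k) = (i < j < k).
Proof.
apply/allpairsPdep/idP => [[j' [i' []]]|/andP[ij jk]].
  by rewrite !mem_iota /= => jk ij [-> ->]; rewrite ij.
by exists j, i; rewrite !mem_iota /= jk (leq_trans ij).
Qed.

Lemma size_ltn_pairs k : size (ltn_pairs k) = 'C(k, 2).
Proof.
rewrite size_allpairs_dep; elim: k => // k IH.
by rewrite -addn1 iotaD map_cat sumn_cat IH /= size_iota addn0 addn1 binS bin1 addnC.
Qed.

Lemma size_design B1 B2 k : size (design B1 B2 k) = k * size B1 + 'C(k, 2) * size B2.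
Proof. by rewrite size_cat !size_allpairs size_iota size_ltn_pairs. Qed.

Definition block (v : nat) := (v - 3) %/ 16.

Lemma lift_block_local i v : (v < 3) || (block v == i) ->
  exists u, [/\ u < 19, (u < 3) = (v < 3) & lift_block i u = v].
Proof.
case: (ltnP v 3) => [v3 _|v3 /eqP v_blk].
  by exists v; rewrite /lift_block v3; split=> //; lia.
rewrite /block in v_blk; have u3 : (v - 16 * i < 3) = false.
  by apply/negbTE; rewrite -leqNgt; lia.
by exists (v - 16 * i); rewrite /lift_block u3; split=> //; lia.
Qed.

Lemma lift_pair_local x y : 3 <= x -> 3 <= y ->
  lift_pair (block x) (block y) ((x - 3) %% 16) = x /\
  lift_pair (block x) (block y) (16 + (y - 3) %% 16) = y.
Proof.
move=> x3 y3; rewrite /lift_pair ltn_pmod // ltnNge leq_addr /block /=; split; lia.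
Qed.

Lemma count_design k : 8 * (k * 21 + 'C(k, 2) * 32) + 3 = 'C(3 + 16 * k, 2).
Proof.
rewrite !bin2 -!divn2 /=.
have even_k : k * k.-1 = (k * k.-1) %/ 2 * 2.
  by rewrite divnK // dvdn2 oddM; case: k => //= k; case: (odd k).
nia.
Qed.

Section Design.
Variables (B1 B2 : seq (seq nat)) (k : nat).
Hypotheses (B1_on : all (word_on 19) B1) (B2_on : all (word_on 32) B2).

Lemma design_word_on : all (word_on (3 + 16 * k)) (design B1 B2 k).
Proof.
apply/allP => s; rewrite mem_cat => /orP[] /allpairsP[[i b] [/= + Bb ->]].
  have /and3P[b8 ub /allP b19] := allP B1_on b Bb; rewrite mem_iota /= => ik.
  rewrite /word_on size_map b8 map_inj_uniq ?ub //=; last exact: lift_block_inj.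
  by apply/allP => _ /mapP[x /b19 + ->]; rewrite /lift_block; case: ifP; lia.
have /and3P[b8 ub /allP b32] := allP B2_on b Bb.
case: i => i j; rewrite mem_ltn_pairs => /andP[ij jk].
rewrite /word_on size_map b8 map_inj_uniq ?ub //=; last exact: lift_pair_inj.
by apply/allP => _ /mapP[x /b32 + ->]; rewrite /lift_pair; case: ifP; lia.
Qed.

Lemma design_adj_block i x y : i < k ->
  has (fun b => word_adj b x y) B1 ->
  has (fun s => word_adj s (lift_block i x) (lift_block i y)) (design B1 B2 k).
Proof.
move=> ik /(has_word_adj_map (lift_block i) (sizes_of_word_on B1_on)) /hasP[s Bs adj].
apply/hasP; exists s => //; rewrite mem_cat; apply/orP; left.
apply/flattenP; exists [seq map (lift_block i) b | b <- B1] => //.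
by apply: (map_f (fun i => [seq map (lift_block i) b | b <- B1])); rewrite mem_iota.
Qed.

Lemma design_adj_pair i j x y : i < j < k ->
  has (fun b => word_adj b x y) B2 ->
  has (fun s => word_adj s (lift_pair i j x) (lift_pair i j y)) (design B1 B2 k).
Proof.
move=> ijk /(has_word_adj_map (lift_pair i j) (sizes_of_word_on B2_on)) /hasP[s Bs adj].
apply/hasP; exists s => //; rewrite mem_cat; apply/orP; right.
apply/flattenP; exists [seq map (lift_pair (i, j).1 (i, j).2) b | b <- B2] => //.
by apply: (map_f (fun p => [seq map (lift_pair p.1 p.2) b | b <- B2])); rewrite mem_ltn_pairs.
Qed.

Lemma design_adj_same_block x y : covers 19 B1 -> y < 3 + 16 * k -> 3 <= y -> x != y ->
  (x < 3) || (block x == block y) -> has (fun s => word_adj s x y) (design B1 B2 k).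
Proof.
move=> /coversP cov1 hy y3 xy /lift_block_local[ux [ux19 ux3 Ex]].
have /lift_block_local[uy [uy19 uy3 Ey]] : (y < 3) || (block y == block y).
  by rewrite eqxx orbT.
have yk : block y < k by rewrite /block; lia.
rewrite -Ey -Ex; apply: (design_adj_block yk); apply: cov1 => //.
  by apply: contraNneq xy => E; apply/eqP; rewrite -Ex E.
by rewrite ux3 uy3 [y < 3]ltnNge y3 andbF.
Qed.

Lemma design_adj_cross_blocks x y : covers_bipartite B2 -> y < 3 + 16 * k ->
  3 <= x -> 3 <= y -> block x < block y -> has (fun s => word_adj s x y) (design B1 B2 k).
Proof.
move=> cov2 hy x3 y3 lt_blk; have [ex ey] := lift_pair_local x3 y3.
have := design_adj_pair (i := block x) (j := block y) _
  (covers_bipartiteP cov2 (ltn_pmod (x - 3) (isT : 0 < 16)) (ltn_pmod (y - 3) (isT : 0 < 16))).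
by rewrite ex ey lt_blk /block; apply; lia.
Qed.

Lemma design_covers :
  covers 19 B1 -> covers_bipartite B2 -> covers (3 + 16 * k) (design B1 B2 k).
Proof.
move=> cov1 cov2; apply/coversP => x y hx hy xy xy3.
have sym : has (fun s => word_adj s y x) (design B1 B2 k) ->
           has (fun s => word_adj s x y) (design B1 B2 k).
  by apply: sub_has => s; rewrite word_adj_sym.
have [x3|x3] := ltnP x 3.
  by apply: design_adj_same_block; rewrite ?x3 //; rewrite x3 /= -leqNgt in xy3.
have [y3|y3] := ltnP y 3.
  by apply/sym/design_adj_same_block; rewrite ?y3 // eq_sym.
have [lt|gt|eq] := ltngtP (block x) (block y).
- exact: design_adj_cross_blocks.
- exact/sym/design_adj_cross_blocks.
- by apply: design_adj_same_block; rewrite // eq eqxx orbT.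
Qed.

Lemma design_inside B1' B2' :
    all (word_on 19) B1' -> all (word_on 32) B2' ->
    all2 word_inside B1 B1' -> all2 word_inside B2 B2' ->
  all2 word_inside (design B1 B2 k) (design B1' B2' k).
Proof.
move=> /sizes_of_word_on B1'8 /sizes_of_word_on B2'8 in1 in2.
have B18 := sizes_of_word_on B1_on; have B28 := sizes_of_word_on B2_on.
apply: all2_cat; apply: all2_flatten; rewrite all2_map_same; apply/allP.
  by move=> i _; apply: all2_word_inside_map => //; apply: lift_block_inj.
case=> i j; rewrite mem_ltn_pairs => /andP[ij _].
by apply: all2_word_inside_map => //; apply: lift_pair_inj.
Qed.

Lemma design_packing :
    covers 19 B1 -> covers_bipartite B2 -> size B1 = 21 -> size B2 = 32 ->
  let P := map (@cycle_of_word (2 + 16 * k)) (design B1 B2 k) in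
  is_packing P /\ leave P = triangle (2 + 16 * k).
Proof.
move=> cov1 cov2 size1 size2; apply: packing_of_words.
- exact: design_word_on.
- exact: design_covers.
by rewrite size_design size1 size2 -count_design.
Qed.
End Design.

(* [base19] decomposes K_19 minus the triangle {0, 1, 2}, and [base16x16] decomposes the K_16,16
   with parts {0, ..., 15} and {16, ..., 31}; the primed lists consist of inside 8-cycles of the
   corresponding cycles, listed in the same order. *)
Definition base19 : seq (seq nat) := [:: [:: 3; 4; 5; 6; 7; 8; 9; 10];
  [:: 3; 9; 16; 18; 14; 12; 5; 7];
  [:: 4; 10; 17; 11; 15; 13; 6; 8];
  [:: 5; 3; 18; 12; 16; 14; 7; 9];
  [:: 6; 4; 11; 13; 17; 15; 8; 10];
  [:: 0; 3; 2; 12; 8; 14; 9; 17];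
  [:: 0; 4; 2; 13; 9; 15; 10; 18];
  [:: 0; 5; 2; 14; 10; 16; 3; 11];
  [:: 0; 6; 2; 15; 3; 17; 4; 12];
  [:: 0; 7; 2; 16; 4; 18; 5; 13];
  [:: 0; 8; 2; 17; 5; 11; 6; 14];
  [:: 0; 9; 2; 18; 6; 12; 7; 15];
  [:: 0; 10; 2; 11; 7; 13; 8; 16];
  [:: 1; 3; 6; 15; 4; 14; 13; 16];
  [:: 1; 4; 7; 16; 5; 15; 14; 17];
  [:: 1; 5; 8; 17; 6; 16; 15; 18];
  [:: 1; 6; 9; 18; 7; 17; 16; 11];
  [:: 1; 7; 10; 11; 8; 18; 17; 12];
  [:: 1; 8; 3; 12; 9; 11; 18; 13];
  [:: 1; 9; 4; 13; 10; 12; 11; 14];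
  [:: 1; 10; 5; 14; 3; 13; 12; 15]].
Definition base19' : seq (seq nat) := [:: [:: 3; 6; 9; 4; 7; 10; 5; 8];
  [:: 3; 5; 9; 7; 18; 12; 16; 14];
  [:: 4; 6; 10; 8; 11; 13; 17; 15];
  [:: 5; 7; 3; 9; 12; 14; 18; 16];
  [:: 6; 8; 4; 10; 13; 15; 11; 17];
  [:: 0; 8; 9; 2; 14; 17; 3; 12];
  [:: 0; 9; 10; 2; 15; 18; 4; 13];
  [:: 0; 10; 3; 2; 16; 11; 5; 14];
  [:: 0; 3; 4; 2; 17; 12; 6; 15];
  [:: 0; 4; 5; 2; 18; 13; 7; 16];
  [:: 0; 5; 6; 2; 11; 14; 8; 17];
  [:: 0; 6; 7; 2; 12; 15; 9; 18];
  [:: 0; 7; 8; 2; 13; 16; 10; 11];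
  [:: 1; 4; 16; 3; 13; 6; 14; 15];
  [:: 1; 5; 17; 4; 14; 7; 15; 16];
  [:: 1; 6; 18; 5; 15; 8; 16; 17];
  [:: 1; 7; 11; 6; 16; 9; 17; 18];
  [:: 1; 8; 12; 7; 17; 10; 18; 11];
  [:: 1; 9; 13; 8; 18; 3; 11; 12];
  [:: 1; 10; 14; 9; 11; 4; 12; 13];
  [:: 1; 3; 15; 10; 12; 5; 13; 14]].
Definition base16x16 : seq (seq nat) := [:: [:: 0; 16; 3; 19; 2; 18; 1; 17];
  [:: 0; 18; 3; 17; 2; 16; 1; 19];
  [:: 0; 20; 3; 23; 2; 22; 1; 21];
  [:: 0; 22; 3; 21; 2; 20; 1; 23];
  [:: 0; 24; 3; 27; 2; 26; 1; 25];
  [:: 0; 26; 3; 25; 2; 24; 1; 27];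
  [:: 0; 28; 3; 31; 2; 30; 1; 29];
  [:: 0; 30; 3; 29; 2; 28; 1; 31];
  [:: 4; 16; 7; 19; 6; 18; 5; 17];
  [:: 4; 18; 7; 17; 6; 16; 5; 19];
  [:: 4; 20; 7; 23; 6; 22; 5; 21];
  [:: 4; 22; 7; 21; 6; 20; 5; 23];
  [:: 4; 24; 7; 27; 6; 26; 5; 25];
  [:: 4; 26; 7; 25; 6; 24; 5; 27];
  [:: 4; 28; 7; 31; 6; 30; 5; 29];
  [:: 4; 30; 7; 29; 6; 28; 5; 31];
  [:: 8; 16; 11; 19; 10; 18; 9; 17];
  [:: 8; 18; 11; 17; 10; 16; 9; 19];
  [:: 8; 20; 11; 23; 10; 22; 9; 21];
  [:: 8; 22; 11; 21; 10; 20; 9; 23];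
  [:: 8; 24; 11; 27; 10; 26; 9; 25];
  [:: 8; 26; 11; 25; 10; 24; 9; 27];
  [:: 8; 28; 11; 31; 10; 30; 9; 29];
  [:: 8; 30; 11; 29; 10; 28; 9; 31];
  [:: 12; 16; 15; 19; 14; 18; 13; 17];
  [:: 12; 18; 15; 17; 14; 16; 13; 19];
  [:: 12; 20; 15; 23; 14; 22; 13; 21];
  [:: 12; 22; 15; 21; 14; 20; 13; 23];
  [:: 12; 24; 15; 27; 14; 26; 13; 25];
  [:: 12; 26; 15; 25; 14; 24; 13; 27];
  [:: 12; 28; 15; 31; 14; 30; 13; 29];
  [:: 12; 30; 15; 29; 14; 28; 13; 31]].
Definition base16x16' : seq (seq nat) := [:: [:: 0; 18; 3; 17; 2; 16; 1; 19];
  [:: 0; 16; 3; 19; 2; 18; 1; 17];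
  [:: 0; 22; 3; 21; 2; 20; 1; 23];
  [:: 0; 20; 3; 23; 2; 22; 1; 21];
  [:: 0; 26; 3; 25; 2; 24; 1; 27];
  [:: 0; 24; 3; 27; 2; 26; 1; 25];
  [:: 0; 30; 3; 29; 2; 28; 1; 31];
  [:: 0; 28; 3; 31; 2; 30; 1; 29];
  [:: 4; 18; 7; 17; 6; 16; 5; 19];
  [:: 4; 16; 7; 19; 6; 18; 5; 17];
  [:: 4; 22; 7; 21; 6; 20; 5; 23];
  [:: 4; 20; 7; 23; 6; 22; 5; 21];
  [:: 4; 26; 7; 25; 6; 24; 5; 27];
  [:: 4; 24; 7; 27; 6; 26; 5; 25];
  [:: 4; 30; 7; 29; 6; 28; 5; 31];
  [:: 4; 28; 7; 31; 6; 30; 5; 29];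
  [:: 8; 18; 11; 17; 10; 16; 9; 19];
  [:: 8; 16; 11; 19; 10; 18; 9; 17];
  [:: 8; 22; 11; 21; 10; 20; 9; 23];
  [:: 8; 20; 11; 23; 10; 22; 9; 21];
  [:: 8; 26; 11; 25; 10; 24; 9; 27];
  [:: 8; 24; 11; 27; 10; 26; 9; 25];
  [:: 8; 30; 11; 29; 10; 28; 9; 31];
  [:: 8; 28; 11; 31; 10; 30; 9; 29];
  [:: 12; 18; 15; 17; 14; 16; 13; 19];
  [:: 12; 16; 15; 19; 14; 18; 13; 17];
  [:: 12; 22; 15; 21; 14; 20; 13; 23];
  [:: 12; 20; 15; 23; 14; 22; 13; 21];
  [:: 12; 26; 15; 25; 14; 24; 13; 27];
  [:: 12; 24; 15; 27; 14; 26; 13; 25];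
  [:: 12; 30; 15; 29; 14; 28; 13; 31];
  [:: 12; 28; 15; 31; 14; 30; 13; 29]].

Lemma base_designs_ok :
  [&& all (word_on 19) base19, all (word_on 19) base19',
      all (word_on 32) base16x16, all (word_on 32) base16x16',
      covers 19 base19, covers 19 base19',
      covers_bipartite base16x16, covers_bipartite base16x16' &
  [&& all2 word_inside base19 base19', all2 word_inside base16x16 base16x16',
      size base19 == 21 & size base16x16 == 32]].
Proof. by vm_compute. Qed.

Theorem lemma3p2 (n : nat) :
  n %% 16 = 3 -> 19 <= n ->
  exists P : seq (8.-tuple 'I_n),
    is_maximum_packing P /\ almost_2perfect P.
Proof.
move=> n_mod _; have [k ->] : exists k, n = 3 + 16 * k by exists (n %/ 16); lia.
case/and5P: base_designs_ok => on19 on19' on32 on32'.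
case/and5P=> cov19 cov19' cov32 cov32' /and4P[in19 in32 /eqP size19 /eqP size32].
have size19' : size base19' = 21 by move: in19; rewrite all2E size19 => /andP[/eqP].
have size32' : size base16x16' = 32 by move: in32; rewrite all2E size32 => /andP[/eqP].
have [packP leaveP] := design_packing k on19 on32 cov19 cov32 size19 size32.
have [packP' leaveP'] := design_packing k on19' on32' cov19' cov32' size19' size32'.
exists (map (@cycle_of_word (2 + 16 * k)) (design base19 base16x16 k)); split.
  apply: maximum_packing_small_leave packP _.
  by rewrite leaveP; apply: leq_ltn_trans (card_triangle _) _.
exists (map (@cycle_of_word (2 + 16 * k)) (design base19' base16x16' k)); split.
- by rewrite !size_map !size_design size19 size19' size32 size32'.
- apply: inside_of_words; rewrite ?design_word_on //.
  exact: design_inside.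
- exact: packP'.
- by rewrite leaveP leaveP'.
Qed.
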